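(* Let $T\ge3$ and suppose the standing assumptions hold, each $f_t$ is nonnegative and $H$-smooth on $\mathcal{X}$, and each $f_t$ is $\lambda$-strongly convex for some $\lambda\in[1/T,1]$. Suppose $\mathcal{A}_{str}$ contains algorithms $A_1,A_2$ for which there is a constant $C_1>0$ such that for every $\lambda'>0$, $R(A_1,\lambda')\le \frac{C_1}{\lambda'}\ln(V_T+2)$ and $R(A_2,\lambda')\le \frac{C_1}{\lambda'}\ln(L_T^*+2)$ (as is the case for OEGD and S$^2$OGD). Then there is a constant $C$ depending only on $G,D,H,C_1$ and $|\mathcal{A}_{str}|+|\mathcal{A}_{exp}|+|\mathcal{A}_{con}|$ such that USC satisfies \[ \sum_{t=1}^T f_t(\mathbf{x}_t)-\min_{\mathbf{x}\in\mathcal{X}}\sum_{t=1}^T f_t(\mathbf{x})\le \frac{C}{\lambda}\Big(\min\{\ln(L_T^*+2),\ln(V_T+2)\}+\ln\ln T\Big). \]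
   Context: Setting (online convex optimization): $\mathcal{X}\subset\mathbb{R}^d$ is a nonempty closed convex set with $\max_{\mathbf{x},\mathbf{y}\in\mathcal{X}}\|\mathbf{x}-\mathbf{y}\|\le D$. For $t=1,\dots,T$, $f_t:\mathcal{X}\to\mathbb{R}$ are convex differentiable functions with $\max_{\mathbf{x}\in\mathcal{X}}\|\nabla f_t(\mathbf{x})\|\le G$. At round $t$ a learner outputs $\mathbf{x}_t\in\mathcal{X}$ depending only on $f_1,\dots,f_{t-1}$, then $f_t$ is revealed. An online algorithm (expert) is any such procedure. $f$ is $H$-smooth on $\mathcal{X}$ if $\|\nabla f(\mathbf{x})-\nabla f(\mathbf{y})\|\le H\|\mathbf{x}-\mathbf{y}\|$ for all $\mathbf{x},\mathbf{y}\in\mathcal{X}$. $L_T^*=\min_{\mathbf{x}\in\mathcal{X}}\sum_{t=1}^Tf_t(\mathbf{x})$, and $V_T=\sum_{t=1}^T\max_{\mathbf{x}\in\mathcal{X}}\|\nabla f_t(\mathbf{x})-\nabla f_{t-1}(\mathbf{x})\|^2$ with the convention $f_0\equiv0$. A function $f$ is $\lambda$-strongly convex on $\mathcal{X}$ if $f(\mathbf{y})\ge f(\mathbf{x})+\langle\nabla f(\mathbf{x}),\mathbf{y}-\mathbf{x}\rangle+\frac{\lambda}{2}\|\mathbf{y}-\mathbf{x}\|^2$ for all $\mathbf{x},\mathbf{y}\in\mathcal{X}$. Algorithm USC: Let $N=\lceil\log_2T\rceil$ and $\mathcal{P}_{str}=\mathcal{P}_{exp}=\{2^k/T: k=0,1,\dots,N\}$.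 Let $\mathcal{A}_{str},\mathcal{A}_{exp}$ be finite sets of online algorithms each taking a positive parameter, and $\mathcal{A}_{con}$ a finite set of online algorithms. The expert set $\mathcal{E}$ consists of the experts $E(A,\lambda')$ ($A$ run with parameter $\lambda'$) for $A\in\mathcal{A}_{str},\lambda'\in\mathcal{P}_{str}$; $E(A,\alpha')$ for $A\in\mathcal{A}_{exp},\alpha'\in\mathcal{P}_{exp}$; and $E(A)$ for $A\in\mathcal{A}_{con}$. Index them $E^1,\dots,E^{|\mathcal{E}|}$; every expert receives the full functions $f_1,f_2,\dots$ and outputs $\mathbf{x}_t^i\in\mathcal{X}$ at round $t$. Fix any $\bar{\mathbf{x}}\in\mathcal{X}$. USC outputs $\mathbf{x}_t=\sum_i p_t^i\mathbf{x}_t^i$ with weights given by Adapt-ML-Prod on the losses $\ell_t^i=\frac{\langle\nabla f_t(\mathbf{x}_t),\mathbf{x}_t^i-\bar{\mathbf{x}}\rangle+GD}{2GD}\in[0,1]$, $\ell_t=\sum_ip_t^i\ell_t^i$: namely $p_t^i=\eta_{t-1}^iw_{t-1}^i/\sum_j\eta_{t-1}^jw_{t-1}^j$, where $\eta_{t-1}^i=\min\{\frac12,\sqrt{\ln|\mathcal{E}|/(1+\sum_{s=1}^{t-1}(\ell_s-\ell_s^i)^2)}\}$ for $t\ge1$, $w_0^i=1/|\mathcal{E}|$, and $w_{t-1}^i=\big(w_{t-2}^i(1+\eta_{t-2}^i(\ell_{t-1}-\ell_{t-1}^i))\big)^{\eta_{t-1}^i/\eta_{t-2}^i}$ for $t\ge2$.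 For $A\in\mathcal{A}_{str}$ and $\lambda'>0$, $R(A,\lambda')$ denotes a regret bound of $A$: a number (possibly depending on $L_T^*,V_T$) such that whenever $f_1,\dots,f_T$ satisfy the setting (including nonnegativity and $H$-smoothness) and are all $\lambda'$-strongly convex, the outputs $\mathbf{y}_t$ of $A$ run with parameter $\lambda'$ satisfy $\sum_t f_t(\mathbf{y}_t)-\min_{\mathbf{x}\in\mathcal{X}}\sum_tf_t(\mathbf{x})\le R(A,\lambda')$. *)

From HB Require Import structures.
From mathcomp Require Import all_boot all_order all_algebra.
From mathcomp Require Import all_classical all_reals all_analysis.
From Stdlib Require List.
Set Implicit Arguments. Unset Strict Implicit. Unset Printing Implicit Defensive.
Import Order.TTheory GRing.Theory Num.Theory.
Import numFieldNormedType.Exports.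
Local Open Scope classical_set_scope.
Local Open Scope ring_scope.

Section OCO.
Variables (R : realType) (d : nat).
Notation vec := 'rV[R]_d.

Definition dot (u v : vec) : R := \sum_(i < d) u 0 i * v 0 i.
Definition enorm (u : vec) : R := Num.sqrt (dot u u).

Definition grad (f : vec -> R) (x : vec) : vec :=
  \row_(i < d) ('d f x (delta_mx 0 i : vec)).

(* An online algorithm (expert): the output at round t is a function of the
   previously revealed functions f_1, ..., f_{t-1}. *)
Definition alg := seq (vec -> R) -> vec.

Definition hist (fs : nat -> vec -> R) (t : nat) : seq (vec -> R) :=
  map fs (iota 1 t).

Definition convex_set (X : set vec) : Prop :=
  forall x y a, X x -> X y -> 0 <= a <= 1 -> X (a *: x + (1 - a) *: y).

Definition convex_on (X : set vec) (f : vec -> R) : Prop :=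
  forall x y a, X x -> X y -> 0 <= a <= 1 ->
    f (a *: x + (1 - a) *: y) <= a * f x + (1 - a) * f y.

Definition strongly_convex_on (X : set vec) (lam : R) (f : vec -> R) : Prop :=
  forall x y, X x -> X y ->
    f x + dot (grad f x) (y - x) + lam / 2 * enorm (y - x) ^+ 2 <= f y.

Definition smooth_on (X : set vec) (H : R) (f : vec -> R) : Prop :=
  forall x y, X x -> X y -> enorm (grad f x - grad f y) <= H * enorm (x - y).

Definition domain_ok (X : set vec) (D : R) : Prop :=
  [/\ exists x, X x, closed X, convex_set X &
      forall x y, X x -> X y -> enorm (x - y) <= D].

Definition setting (X : set vec) (G H : R) (T : nat) (fs : nat -> vec -> R)
  : Prop :=
  forall t, (1 <= t <= T)%N ->
    [/\ forall x, X x -> differentiable (fs t) x,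
        convex_on X (fs t),
        forall x, X x -> enorm (grad (fs t) x) <= G,
        forall x, X x -> 0 <= fs t x &
        smooth_on X H (fs t)].

Definition cumloss (T : nat) (fs : nat -> vec -> R) (x : vec) : R :=
  \sum_(1 <= t < T.+1) fs t x.

(* L_T^* = min_{x in X} sum_t f_t(x) (the minimum exists; written as inf) *)
Definition Lstar (X : set vec) (T : nat) (fs : nat -> vec -> R) : R :=
  inf [set cumloss T fs x | x in X].

(* V_T, with f_0 = 0 (so grad f_0 = 0) *)
Definition VT (X : set vec) (T : nat) (fs : nat -> vec -> R) : R :=
  \sum_(1 <= t < T.+1)
    sup [set enorm (grad (fs t) x -
                    (if t == 1%N then 0 else grad (fs t.-1) x)) ^+ 2 | x in X].

Definition regret (X : set vec) (T : nat) (fs : nat -> vec -> R)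
  (xs : nat -> vec) : R :=
  \sum_(1 <= t < T.+1) fs t (xs t) - Lstar X T fs.

Definition run (A : alg) (fs : nat -> vec -> R) (t : nat) : vec :=
  A (hist fs t.-1).

(* N = ceil(log2 T); P = {2^k / T : k = 0..N} *)
Definition grid (T : nat) : seq R :=
  [seq (2 ^ k)%:R / T%:R | k <- iota 0 (up_log 2 T).+1].

Definition experts (T : nat) (Astr Aexp : seq (R -> alg)) (Acon : seq alg)
  : seq alg :=
  [seq A l | A <- Astr, l <- grid T] ++ [seq A a | A <- Aexp, a <- grid T]
  ++ Acon.

Section USC.
Variables (G D : R) (xbar : vec) (es : seq alg) (fs : nat -> vec -> R).
Let K := size es.
Let e0 : alg := fun _ => 0.

Definition expert_out (i t : nat) : vec := run (nth e0 es i) fs t.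

(* eta^i computed from the cumulative sum S^i = sum_s (l_s - l_s^i)^2 *)
Definition eta_of (S : nat -> R) (i : nat) : R :=
  Num.min (2^-1) (Num.sqrt (ln K%:R / (1 + S i))).

Definition probs (w S : nat -> R) (i : nat) : R :=
  eta_of S i * w i / \sum_(j < K) eta_of S j * w j.

Definition combine (w S : nat -> R) (t : nat) : vec :=
  \sum_(i < K) probs w S i *: expert_out i t.

Definition loss_i (x : vec) (t i : nat) : R :=
  (dot (grad (fs t) x) (expert_out i t - xbar) + G * D) / (2 * G * D).

Fixpoint usc_state (t : nat) : (nat -> R) * (nat -> R) :=
  match t with
  | 0 => (fun _ => K%:R^-1, fun _ => 0)
  | t'.+1 =>
      let (w, S) := usc_state t' in
      let x := combine w S t in
      let l := loss_i x t in
      let lbar := \sum_(i < K) probs w S i * l i in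
      let S' := fun i => S i + (lbar - l i) ^+ 2 in
      (fun i => powR (w i * (1 + eta_of S i * (lbar - l i)))
                     (eta_of S' i / eta_of S i), S')
  end.

Definition usc (t : nat) : vec :=
  let (w, S) := usc_state t.-1 in combine w S t.

End USC.
End OCO.

(* USC is Adapt-ML-Prod run on losses that are linear in the experts' points.
   Against every expert i, Adapt-ML-Prod has the second-order regret bound
     sum_t r_t^i <= O(ln K + B) + O(sqrt (ln K) + B / sqrt (ln K)) * sqrt (1 + sum_t (r_t^i)^2),
   where r_t^i is the instantaneous regret and B = ln (1 + K ln (1 + T)) <= 6 ln K.
   Strong convexity of f_t and Cauchy-Schwarz give
     f_t(x_t) - f_t(x_t^i) <= 2 G D r_t^i - 2 lam D^2 (r_t^i)^2,
   and the negative quadratic term absorbs the square root by AM-GM, so USC is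
   within O((ln K) / lam) of every expert. The grid contains some lam' in
   [lam / 2, lam], and the functions are lam'-strongly convex, so the experts
   running A_1 and A_2 with parameter lam' have regret at most 2 C1 / lam times
   ln (V_T + 2) and ln (L_T^* + 2) respectively. Finally K <= n (log2 T + 1), so
   ln K = O(ln n + ln ln T). *)

From Pilot Require Import Defs.
From HB Require Import structures.
From mathcomp Require Import all_boot all_order all_algebra.
From mathcomp Require Import all_classical all_reals all_analysis.
From mathcomp Require Import ring lra zify.
From Stdlib Require List.
Import Order.TTheory GRing.Theory Num.Theory.
Import numFieldNormedType.Exports.
Local Open Scope classical_set_scope.
Local Open Scope ring_scope.
Set Implicit Arguments. Unset Strict Implicit. Unset Printing Implicit Defensive.

Section RealInequalities.
Variable R : realType.

Lemma ln_le_subr1 (z : R) : 0 < z -> ln z <= z - 1.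
Proof. by move=> z0; have := @le_ln1Dx R (z - 1); rewrite (addrC 1) subrK; apply; lra. Qed.

Lemma ln1Dx_ge_div (x : R) : -1 < x -> x / (1 + x) <= ln (1 + x).
Proof.
move=> x1; have x1' : 0 < 1 + x by lra.
have := @ln_le_subr1 (1 + x)^-1; rewrite invr_gt0 lnV ?posrE // => /(_ x1').
have -> : (1 + x)^-1 - 1 = - (x / (1 + x)) by field; exact: lt0r_neq0.
lra.
Qed.

(* Combine ln z <= z - 1 at z = x / y and at z = 1 / y with weights a and 1 - a. *)
Lemma powR_le_bernoulli (x a : R) : 0 < x -> 0 < a <= 1 ->
  x `^ a <= 1 + a * (x - 1).
Proof.
move=> x0 /andP[a0 a1]; set y := 1 + a * (x - 1).
have y0 : 0 < y by rewrite /y; nra.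
rewrite -(ler_ln (powR_gt0 _ x0) y0) ln_powR.
have := ln_le_subr1 (divr_gt0 x0 y0); rewrite ln_div ?posrE // => hxy.
have := @ln_le_subr1 y^-1; rewrite invr_gt0 lnV ?posrE // => /(_ y0) hy.
have e : a * (x / y - 1) + (1 - a) * (y^-1 - 1) = 0.
  by rewrite /y; field; exact: lt0r_neq0.
have : a * (ln x - ln y) + (1 - a) * (- ln y) <= 0.
  rewrite -e; apply: lerD; apply: ler_wpM2l; lra.
lra.
Qed.

Lemma div_sqrt_le_sqrtD (a q : R) : 1 <= a -> 0 <= q <= 1 ->
  q / Num.sqrt a <= 3 * (Num.sqrt (a + q) - Num.sqrt a).
Proof.
move=> a1 /andP[q0 q1]; set u := Num.sqrt a; set v := Num.sqrt (a + q).
have u2 : u ^+ 2 = a by rewrite sqr_sqrtr //; lra.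
have v2 : v ^+ 2 = a + q by rewrite sqr_sqrtr //; lra.
have v0 : 0 <= v by apply: sqrtr_ge0.
have u1 : 1 <= u by rewrite -(sqrtr1 R) ler_wsqrtr.
have vu : u <= v by apply: ler_wsqrtr; lra.
have v2u : v <= 2 * u by rewrite leNgt; apply/negP => h; nra.
rewrite ler_pdivrMr; nra.
Qed.

Lemma ln2_ge_half : 2^-1 <= ln (2 : R).
Proof.
suff : expR (2^-1) <= 2 :> R by rewrite -ler_ln ?posrE ?expR_gt0 // expRK.
have := @expR_ge1Dx R (- 2^-1); have := @expRxMexpNx_1 R (2^-1).
have := @expR_gt0 R (2^-1); set a := expR _; set b := expR _ => a0 ab hb.
have : 0 <= a * (b - 2^-1) by apply: mulr_ge0; lra.
have -> : a * (b - 2^-1) = 1 - a / 2 by rewrite mulrBr ab; field.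
lra.
Qed.

Lemma ln2_le1 : ln (2 : R) <= 1.
Proof. by have := @ln_le_subr1 2 (ltr0n _ 2); lra. Qed.

Lemma expR1_le3 : expR (1 : R) <= 3.
Proof.
have a_le : expR (6^-1) <= 6 / 5 :> R.
  have := @expR_ge1Dx R (- 6^-1); have := @expRxMexpNx_1 R (6^-1).
  have := @expR_gt0 R (6^-1); set a := expR _; set b := expR _ => a0 ab hb.
  have : 0 <= a * (b - 5 / 6) by apply: mulr_ge0; lra.
  have -> : a * (b - 5 / 6) = 1 - a * 5 / 6 by rewrite mulrBr ab; field.
  lra.
have -> : expR (1 : R) = expR (6^-1) ^+ 6 by rewrite -expRM_natr mulVf.
have : expR (6^-1) ^+ 6 <= (6 / 5) ^+ 6 :> R.
  by apply: lerXn2r => //; rewrite nnegrE ltW ?expR_gt0.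
by rewrite [X in _ <= X -> _]exprS !exprS expr0; lra.
Qed.

Lemma ln_nat_ge1 (T : nat) : (3 <= T)%N -> 1 <= ln (T%:R : R).
Proof.
move=> T3; apply: le_trans (_ : ln 3 <= _).
  by have := expR1_le3; rewrite -ler_ln ?posrE ?expR_gt0 // expRK.
by rewrite ler_ln ?posrE ?ltr0n ?ler_nat //; apply: leq_trans T3.
Qed.

End RealInequalities.

Section AdaptiveRate.
Variables (R : realType) (kap : R).
Hypothesis kap_ge : 2^-1 <= kap.

(* [eta_of] is this rate with kap = ln |E|, applied to the cumulated squared
   instantaneous regrets. *)
Definition adaptive_rate (s : R) : R := Num.min (2^-1) (Num.sqrt (kap / (1 + s))).

Let kap_gt0 : 0 < kap. Proof. by move: kap_ge; lra. Qed.

Lemma adaptive_rate_gt0 s : 0 <= s -> 0 < adaptive_rate s.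
Proof. by move=> s0; rewrite lt_min sqrtr_gt0 divr_gt0 //; lra. Qed.

Lemma adaptive_rate_le_half s : adaptive_rate s <= 2^-1.
Proof. by rewrite ge_min lexx. Qed.

Lemma adaptive_rate_le_sqrt s : adaptive_rate s <= Num.sqrt (kap / (1 + s)).
Proof. by rewrite ge_min lexx orbT. Qed.

Lemma adaptive_rate0 : adaptive_rate 0 = 2^-1.
Proof.
rewrite /adaptive_rate addr0 divr1 min_l //.
rewrite -[X in X <= _](@ger0_norm _ (2^-1)) // -sqrtr_sqr ler_wsqrtr //.
by move: kap_ge; rewrite expr2; nra.
Qed.

Lemma adaptive_rate_antimono s s' : 0 <= s -> s <= s' ->
  adaptive_rate s' <= adaptive_rate s.
Proof.
move=> s0 ss'; rewrite le_min !ge_min lexx /=; apply/orP; right.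
apply: ler_wsqrtr; rewrite ler_pdivrMr; last lra.
rewrite mulrAC ler_pdivlMr; last lra.
by apply: ler_wpM2l; [exact: ltW | lra].
Qed.

Lemma adaptive_rate_ge s T : 0 <= s -> s <= T -> 1 <= 2 * (1 + T) * adaptive_rate s.
Proof.
move=> s0 sT; rewrite /adaptive_rate.
have [h|h] := leP (2^-1) (Num.sqrt (kap / (1 + s))); first lra.
set q := Num.sqrt _ in h *.
have q0 : 0 <= q by apply: sqrtr_ge0.
have qk : q ^+ 2 * (1 + s) = kap.
  rewrite sqr_sqrtr ?mulfVK //; first by apply: lt0r_neq0; lra.
  by apply: divr_ge0; [exact: ltW | lra].
rewrite leNgt; apply/negP => hlt.
have : q * (1 + s) < 2^-1 by nra.
have := kap_ge; nra.
Qed.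

Lemma inv_adaptive_rate_le s : 0 <= s ->
  (adaptive_rate s)^-1 <= 2 + Num.sqrt (1 + s) / Num.sqrt kap.
Proof.
move=> s0; have sk : 0 < Num.sqrt kap by rewrite sqrtr_gt0.
have s1 : 0 < Num.sqrt (1 + s) by rewrite sqrtr_gt0; lra.
rewrite /adaptive_rate; have [h|h] := leP (2^-1) (Num.sqrt (kap / (1 + s))).
  by rewrite invrK lerDl divr_ge0 // ltW.
rewrite sqrtrM; last exact: ltW.
by rewrite sqrtrV ?invfM ?invrK 1?mulrC ?lerDr //; lra.
Qed.

End AdaptiveRate.

(* Adapt-ML-Prod for K experts over T rounds, abstracted from the losses: [w t]
   are the weights and [S t] the cumulated squared instantaneous regrets after
   round t, and [r t.+1 i] is the instantaneous regret of expert i at round t+1. *)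
Section AdaptMLProd.
Variables (R : realType) (K T : nat) (w S r : nat -> nat -> R).
Let kap : R := ln K%:R.
Let eta t i := adaptive_rate kap (S t i).
Hypothesis kap_ge : 2^-1 <= kap.
Hypothesis w0 : forall i, w 0%N i = K%:R^-1.
Hypothesis S0 : forall i, S 0%N i = 0.
Hypothesis S_succ : forall t i, S t.+1 i = S t i + r t.+1 i ^+ 2.
Hypothesis w_succ : forall t i,
  w t.+1 i = (w t i * (1 + eta t i * r t.+1 i)) `^ (eta t.+1 i / eta t i).
Hypothesis r_bounded : forall t i, (t < T)%N -> (i < K)%N ->
  (forall j, (j < K)%N -> 0 < w t j) -> -1 <= r t.+1 i <= 1.
(* the prediction of the master is the eta-weighted average of the experts *)
Hypothesis r_balanced : forall t, (t < T)%N ->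
  (forall j, (j < K)%N -> 0 < w t j) ->
  \sum_(i < K) eta t i * w t i * r t.+1 i = 0.

Let K_gt0 : (0 < K)%N.
Proof. by rewrite lt0n; apply/eqP => K0; move: kap_ge; rewrite /kap K0 ln0 //; lra. Qed.

Lemma ml_prod_sqsum_ge0 t i : 0 <= S t i.
Proof. by elim: t => [|t IH]; rewrite ?S0 // S_succ addr_ge0 // sqr_ge0. Qed.

Let eta_gt0 t i : 0 < eta t i.
Proof. exact: adaptive_rate_gt0 (ml_prod_sqsum_ge0 t i). Qed.

Let eta0 i : eta 0%N i = 2^-1.
Proof. by rewrite /eta S0 adaptive_rate0. Qed.

Let eta_antimono t i : eta t.+1 i <= eta t i.
Proof.
by apply: adaptive_rate_antimono; rewrite ?S_succ ?lerDl ?sqr_ge0 ?ml_prod_sqsum_ge0.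
Qed.

Let eta_r_bounded t i : -1 <= r t.+1 i <= 1 -> - 2^-1 <= eta t i * r t.+1 i <= 2^-1.
Proof.
have := eta_gt0 t i; have := adaptive_rate_le_half kap (S t i); rewrite -/(eta t i).
by move=> e1 e0 /andP[r1 r2]; apply/andP; split; nra.
Qed.

Lemma ml_prod_weight_gt0 t : (t <= T)%N -> forall i, (i < K)%N -> 0 < w t i.
Proof.
elim: t => [|t IH] tT i iK; first by rewrite w0 invr_gt0 ltr0n.
have /andP[h1 _] := eta_r_bounded (r_bounded tT iK (IH (ltnW tT))).
by rewrite w_succ powR_gt0 // mulr_gt0 ?IH ?(ltnW tT) //; lra.
Qed.

Lemma ml_prod_regret_round_bounded t i : (t < T)%N -> (i < K)%N -> -1 <= r t.+1 i <= 1.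
Proof. by move=> tT iK; apply: r_bounded => //; apply: ml_prod_weight_gt0 (ltnW tT). Qed.

Lemma ml_prod_sqsum_le t i : (t <= T)%N -> (i < K)%N -> S t i <= t%:R.
Proof.
elim: t => [|t IH] tT iK; first by rewrite S0.
have := IH (ltnW tT) iK; have /andP[r1 r2] := ml_prod_regret_round_bounded tT iK.
by rewrite S_succ -natr1; nra.
Qed.

(* The ML-Prod potential: weights grow at most by the decrease of ln eta, thanks
   to Bernoulli's inequality for the exponent eta t.+1 / eta t <= 1. *)
Lemma ml_prod_potential_le t : (t <= T)%N ->
  \sum_(i < K) w t i <= 1 + \sum_(i < K) (ln (eta 0%N i) - ln (eta t i)).
Proof.
elim: t => [|t IH] tT.
  rewrite [X in _ <= _ + X]big1 ?addr0; last by move=> i _; rewrite subrr.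
  under eq_bigr do rewrite w0.
  rewrite sumr_const card_ord -[_ *+ K]mulr_natr mulVf //.
  by rewrite pnatr_eq0 -lt0n.
have step (i : 'I_K) : w t.+1 i <=
    w t i * (1 + eta t i * r t.+1 i) + (ln (eta t i) - ln (eta t.+1 i)).
  have /andP[h1 _] := eta_r_bounded (ml_prod_regret_round_bounded tT (ltn_ord i)).
  have x0 : 0 < w t i * (1 + eta t i * r t.+1 i).
    by rewrite mulr_gt0 ?(ml_prod_weight_gt0 (ltnW tT)) //; lra.
  set x := w t i * _ in x0 *; set a := eta t.+1 i / eta t i.
  have a0 : 0 < a by apply: divr_gt0.
  have a1 : a <= 1 by rewrite ler_pdivrMr // mul1r eta_antimono.
  have := powR_le_bernoulli x0 (introT andP (conj a0 a1)).
  have := ln_le_subr1 a0; rewrite ln_div ?posrE //.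
  have : a * x <= x by rewrite ler_piMl // ltW.
  by rewrite w_succ -/x -/a; lra.
apply: le_trans (ler_sum _ (fun i _ => step i)) _.
have balanced : \sum_(i < K) w t i * (1 + eta t i * r t.+1 i) = \sum_(i < K) w t i.
  under eq_bigr do rewrite mulrDr mulr1.
  rewrite big_split /= -[RHS]addr0; congr (_ + _).
  rewrite -[X in _ = X](r_balanced tT (ml_prod_weight_gt0 (ltnW tT))).
  by apply: eq_bigr => i _; ring.
rewrite big_split /= balanced.
have -> : \sum_(i < K) (ln (eta 0%N i) - ln (eta t.+1 i)) =
   \sum_(i < K) (ln (eta 0%N i) - ln (eta t i)) +
   \sum_(i < K) (ln (eta t i) - ln (eta t.+1 i)).
  by rewrite -big_split /=; apply: eq_bigr => i _; ring.
by have := IH (ltnW tT); lra.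
Qed.

(* Uses ln (1 + y) >= y - 2 y^2 for |y| <= 1/2. *)
Lemma ml_prod_ln_weight_ge t i : (t <= T)%N -> (i < K)%N ->
  -2 * kap + \sum_(s < t) (r s.+1 i - 2 * eta s i * r s.+1 i ^+ 2)
    <= ln (w t i) / eta t i.
Proof.
move=> + iK; elim: t => [|t IH] tT.
  by rewrite big_ord0 addr0 w0 eta0 lnV ?posrE ?ltr0n // invrK -/kap; lra.
rewrite big_ord_recr /=.
have ea := eta_gt0 t i; have eb := eta_gt0 t.+1 i.
have wp := ml_prod_weight_gt0 (ltnW tT) iK.
have /andP[y1 y2] := eta_r_bounded (ml_prod_regret_round_bounded tT iK).
set y := eta t i * r t.+1 i in y1 y2.
rewrite w_succ ln_powR lnM ?posrE // -/y; last lra.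
have -> : eta t.+1 i / eta t i * (ln (w t i) + ln (1 + y)) / eta t.+1 i =
   ln (w t i) / eta t i + ln (1 + y) / eta t i.
  by field; rewrite !lt0r_neq0.
have hl : y - 2 * y ^+ 2 <= ln (1 + y).
  apply: le_trans (ln1Dx_ge_div (_ : -1 < y)); last lra.
  rewrite ler_pdivlMr; last lra.
  rewrite -subr_ge0.
  have -> : y - (y - 2 * y ^+ 2) * (1 + y) = y ^+ 2 * (1 + 2 * y) by ring.
  by apply: mulr_ge0; [exact: sqr_ge0 | lra].
have : (y - 2 * y ^+ 2) / eta t i <= ln (1 + y) / eta t i by rewrite ler_pM2r ?invr_gt0.
have -> : (y - 2 * y ^+ 2) / eta t i = r t.+1 i - 2 * eta t i * r t.+1 i ^+ 2.
  by rewrite /y; field; exact: lt0r_neq0.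
by have := IH (ltnW tT); lra.
Qed.

Lemma ml_prod_sum_eta_sqr_le t i : (t <= T)%N -> (i < K)%N ->
  \sum_(s < t) eta s i * r s.+1 i ^+ 2 <=
    3 * Num.sqrt kap * (Num.sqrt (1 + S t i) - 1).
Proof.
move=> + iK; elim: t => [|t IH] tT.
  by rewrite big_ord0 S0 addr0 sqrtr1 subrr mulr0.
rewrite big_ord_recr /= S_succ addrA.
have sk : 0 <= Num.sqrt kap by apply: sqrtr_ge0.
have /andP[r1 r2] := ml_prod_regret_round_bounded tT iK.
have q01 : 0 <= r t.+1 i ^+ 2 <= 1 by rewrite sqr_ge0 expr2 /=; nra.
have S1 : 1 <= 1 + S t i by rewrite lerDl ml_prod_sqsum_ge0.
have step : eta t i * r t.+1 i ^+ 2 <=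
    Num.sqrt kap * (r t.+1 i ^+ 2 / Num.sqrt (1 + S t i)).
  have := adaptive_rate_le_sqrt kap (S t i).
  rewrite sqrtrM ?sqrtrV -/(eta t i); [|lra|by move: kap_ge; lra].
  move=> he; rewrite [X in _ <= X]mulrCA [X in _ <= X]mulrC.
  by apply: ler_wpM2r he; exact: sqr_ge0.
have := ler_wpM2l sk (div_sqrt_le_sqrtD S1 q01).
have := IH (ltnW tT); lra.
Qed.

Lemma ml_prod_ln_eta_drop_le i : (i < K)%N -> ln (eta 0%N i) - ln (eta T i) <= ln (1 + T%:R).
Proof.
move=> iK; have eT := eta_gt0 T i.
have := adaptive_rate_ge kap_ge (ml_prod_sqsum_ge0 T i) (ml_prod_sqsum_le (leqnn T) iK).
rewrite -/(eta T i) eta0 -lerBrDr -[X in X <= _]addr0 => h.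
have T0 : 0 < 1 + T%:R :> R by rewrite ltr_pwDl.
suff : ln (2^-1 : R) <= ln ((1 + T%:R) * eta T i) by rewrite lnM ?posrE //; lra.
by rewrite ler_ln ?posrE ?mulr_gt0 //; lra.
Qed.

(* Second-order regret bound of Adapt-ML-Prod (Gaillard, Stoltz and van Erven,
   2014) against expert i. *)
Theorem adapt_ml_prod_regret i : (i < K)%N ->
  \sum_(s < T) r s.+1 i <=
    2 * ln (1 + K%:R * ln (1 + T%:R)) + 2 * kap + Num.sqrt (1 + S T i) *
     (ln (1 + K%:R * ln (1 + T%:R)) / Num.sqrt kap + 6 * Num.sqrt kap).
Proof.
move=> iK; set B := ln (1 + K%:R * ln (1 + T%:R)).
have sk : 0 < Num.sqrt kap by rewrite sqrtr_gt0; move: kap_ge; lra.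
have su : 0 <= Num.sqrt (1 + S T i) by apply: sqrtr_ge0.
have wp := ml_prod_weight_gt0 (leqnn T) iK.
have lnT : 0 <= ln (1 + T%:R : R) by rewrite ln_ge0 // lerDl.
have lnw_le : ln (w T i) <= B.
  have w_le : w T i <= \sum_(j < K) w T j.
    rewrite (bigD1 (Ordinal iK)) //= lerDl sumr_ge0 // => j _.
    exact: ltW (ml_prod_weight_gt0 (leqnn T) (ltn_ord j)).
  have : \sum_(j < K) (ln (eta 0%N j) - ln (eta T j)) <= K%:R * ln (1 + T%:R).
    apply: le_trans (ler_sum _ (fun j _ => ml_prod_ln_eta_drop_le (ltn_ord j))) _.
    by rewrite sumr_const card_ord mulr_natl.
  have := ml_prod_potential_le (leqnn T).
  by rewrite /B ler_ln ?posrE ?ltr_pwDl ?mulr_ge0 //; lra.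
have lnw_div : ln (w T i) / eta T i <=
    B * 2 + B * (Num.sqrt (1 + S T i) / Num.sqrt kap).
  rewrite -mulrDr; apply: le_trans (_ : B / eta T i <= _).
    by rewrite ler_pM2r ?invr_gt0.
  apply: ler_wpM2l (inv_adaptive_rate_le kap_ge (ml_prod_sqsum_ge0 T i)).
  by rewrite ln_ge0 // lerDl mulr_ge0.
have := ml_prod_ln_weight_ge (leqnn T) iK; rewrite sumrB.
have -> : \sum_(s < T) 2 * eta s i * r s.+1 i ^+ 2 =
    2 * \sum_(s < T) eta s i * r s.+1 i ^+ 2.
  by rewrite mulr_sumr; apply: eq_bigr => s _; ring.
have := ml_prod_sum_eta_sqr_le (leqnn T) iK.
have : 3 * Num.sqrt kap * (Num.sqrt (1 + S T i) - 1) <=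
    3 * (Num.sqrt kap * Num.sqrt (1 + S T i)) by nra.
rewrite mulrDr; lra.
Qed.

End AdaptMLProd.

Section EuclideanSpace.
Variables (R : realType) (d : nat).
Notation vec := 'rV[R]_d.

Lemma dotBr (u v w : vec) : dot u (v - w) = dot u v - dot u w.
Proof.
by rewrite /dot -sumrB; apply: eq_bigr => i _; rewrite !mxE mulrBr.
Qed.

Lemma dotZr (u v : vec) a : dot u (a *: v) = a * dot u v.
Proof. by rewrite /dot mulr_sumr; apply: eq_bigr => i _; rewrite mxE mulrCA. Qed.

Lemma dot_sumr (u : vec) n (F : 'I_n -> vec) :
  dot u (\sum_(i < n) F i) = \sum_(i < n) dot u (F i).
Proof.
by rewrite /dot exchange_big; apply: eq_bigr => j _; rewrite summxE mulr_sumr.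
Qed.

Lemma dotvv_ge0 (u : vec) : 0 <= dot u u.
Proof. by apply: sumr_ge0 => i _; rewrite -expr2 sqr_ge0. Qed.

Lemma enorm_ge0 (u : vec) : 0 <= enorm u.
Proof. exact: sqrtr_ge0. Qed.

Lemma enorm_sqr (u : vec) : enorm u ^+ 2 = dot u u.
Proof. by rewrite sqr_sqrtr // dotvv_ge0. Qed.

(* Cauchy-Schwarz, from the nonnegativity of sum_i (a v_i - b u_i)^2 with
   a = <u, u> and b = <u, v>. *)
Lemma dot_sqr_le (u v : vec) : dot u v ^+ 2 <= dot u u * dot v v.
Proof.
set a := dot u u; set b := dot u v; set c := dot v v.
have a0 : 0 <= a by apply: dotvv_ge0.
have : 0 <= \sum_(i < d) (a * v 0 i - b * u 0 i) ^+ 2.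
  by apply: sumr_ge0 => i _; exact: sqr_ge0.
have -> : \sum_(i < d) (a * v 0 i - b * u 0 i) ^+ 2 = a * (a * c - b ^+ 2).
  rewrite (eq_bigr (fun i : 'I_d => a ^+ 2 * (v 0 i * v 0 i) -
      2 * a * b * (u 0 i * v 0 i) + b ^+ 2 * (u 0 i * u 0 i))); last by move=> i _; ring.
  rewrite big_split sumrB /= -!mulr_sumr.
  by rewrite -[\sum_i v 0 i * _]/(dot v v) -[\sum_i u 0 i * v 0 i]/(dot u v)
    -[\sum_i u 0 i * u 0 i]/(dot u u) -/a -/b -/c; ring.
have [a_eq0|a_neq0] := eqVneq a 0; last by rewrite pmulr_rge0 ?lt_def ?a_neq0 //; lra.
move=> _; rewrite a_eq0 mul0r; suff -> : b = 0 by rewrite expr0n.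
have u0 i : u 0 i = 0.
  have : u 0 i * u 0 i = 0.
    by apply: (psumr_eq0P (P := predT) (F := fun i => u 0 i * u 0 i)) => // j _;
       rewrite -expr2 sqr_ge0.
  by move/eqP; rewrite mulf_eq0 orbb => /eqP.
by rewrite /b /dot big1 // => i _; rewrite u0 mul0r.
Qed.

Lemma ler_norm_dot (u v : vec) : `|dot u v| <= enorm u * enorm v.
Proof.
rewrite -(ler_pXn2r (n := 2)) ?nnegrE ?mulr_ge0 ?enorm_ge0 //.
by rewrite real_normK ?num_real // exprMn !enorm_sqr dot_sqr_le.
Qed.

Lemma convex_set_sum (X : set vec) : Defs.convex_set X ->
  forall n (p : nat -> R) (x : nat -> vec),
  (forall i, (i < n)%N -> 0 <= p i) -> (forall i, (i < n)%N -> X (x i)) ->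
  \sum_(i < n) p i = 1 -> X (\sum_(i < n) p i *: x i).
Proof.
move=> convX; elim=> [|n IH] p x p0 Xx.
  by rewrite big_ord0 => /esym/eqP; rewrite oner_eq0.
rewrite !big_ord_recr /=; set s := \sum_(i < n) p i => sp.
have s0 : 0 <= s by apply: sumr_ge0 => i _; exact: p0 (ltnW (ltn_ord _)).
have [s_eq0|s_neq0] := eqVneq s 0.
  rewrite big1 ?add0r; last first.
    move=> i _; rewrite (psumr_eq0P (P := predT) (F := fun i : 'I_n => p i)) ?scale0r //.
    by move=> j _; exact: p0 (ltnW (ltn_ord _)).
  by move: sp; rewrite s_eq0 add0r => ->; rewrite scale1r; apply: Xx.
have -> : \sum_(i < n) p i *: x i = s *: \sum_(i < n) (p i / s) *: x i.
  by rewrite scaler_sumr; apply: eq_bigr => i _; rewrite scalerA mulrCA mulfV ?mulr1.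
have s_eq : s = 1 - p n by lra.
have XS : X (\sum_(i < n) (p i / s) *: x i).
  apply: (IH (fun i => p i / s)) => [i ilt|i ilt|]; first by rewrite divr_ge0 // p0 // ltnW.
    exact: Xx (ltnW ilt).
  by rewrite -mulr_suml mulfV.
rewrite addrC {1}s_eq; apply: convX XS _ => //; first exact: Xx.
by have := p0 n (ltnSn n); lra.
Qed.

End EuclideanSpace.

Section USCAnalysis.
Variables (R : realType) (d : nat) (X : set 'rV[R]_d) (G D H : R) (T : nat)
  (fs : nat -> 'rV[R]_d -> R) (xbar : 'rV[R]_d) (es : seq (alg R d)).
Let K := size es.

Definition usc_weights t := (usc_state G D xbar es fs t).1.
Definition usc_sqregret t := (usc_state G D xbar es fs t).2.
Definition usc_point t := combine es fs (usc_weights t.-1) (usc_sqregret t.-1) t.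
Definition usc_loss t i := loss_i G D xbar es fs (usc_point t) t i.
Definition usc_mean_loss t :=
  \sum_(i < K) probs es (usc_weights t.-1) (usc_sqregret t.-1) i * usc_loss t i.
Definition usc_regret_round t i := usc_mean_loss t - usc_loss t i.

Let w := usc_weights.
Let S := usc_sqregret.
Let r := usc_regret_round.
Let p t := probs es (w t) (S t).
Let eta t := eta_of es (S t).

Lemma usc_stateS t : usc_state G D xbar es fs t.+1 =
  (fun i => (w t i * (1 + eta t i * r t.+1 i)) `^
     (eta_of es (fun j => S t j + r t.+1 j ^+ 2) i / eta t i),
   fun i => S t i + r t.+1 i ^+ 2).
Proof.
rewrite /eta /r /usc_regret_round /usc_mean_loss /usc_loss /usc_point /w /S
  /usc_weights /usc_sqregret /=.
by case: (usc_state G D xbar es fs t).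
Qed.

Lemma uscE t : usc G D xbar es fs t = usc_point t.
Proof. by rewrite /usc /usc_point /usc_weights /usc_sqregret; case: usc_state. Qed.

Lemma usc_sqregretS t i : S t.+1 i = S t i + r t.+1 i ^+ 2.
Proof. by rewrite {1}/S /usc_sqregret usc_stateS. Qed.

Lemma usc_weightsS t i : w t.+1 i = (w t i * (1 + eta t i * r t.+1 i)) `^
   (eta t.+1 i / eta t i).
Proof.
rewrite {2}/eta; have -> : S t.+1 = fun j => S t j + r t.+1 j ^+ 2.
  by apply: funext => j; exact: usc_sqregretS.
by rewrite {1}/w /usc_weights usc_stateS.
Qed.

Lemma usc_sqregretE t i : S t i = \sum_(s < t) r s.+1 i ^+ 2.
Proof.
by elim: t => [|t IH]; rewrite ?big_ord0 // usc_sqregretS IH big_ord_recr.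
Qed.

Hypothesis G_gt0 : 0 < G.
Hypothesis D_gt0 : 0 < D.
Hypothesis X_dom : domain_ok X D.
Hypothesis fs_setting : setting X G H T fs.
Hypothesis experts_in : forall i t, (i < K)%N -> X (expert_out es fs i t).
Hypothesis xbar_in : X xbar.
Hypothesis lnK_ge : 2^-1 <= ln (K%:R : R).

Let GD_gt0 : 0 < 2 * G * D.
Proof. by rewrite -mulrA mulr_gt0 // mulr_gt0. Qed.

Lemma usc_sqregret_ge0 t i : 0 <= S t i.
Proof. by rewrite usc_sqregretE sumr_ge0 // => s _; exact: sqr_ge0. Qed.

Let eta_gt0 t i : 0 < eta t i.
Proof. by have := adaptive_rate_gt0 lnK_ge (usc_sqregret_ge0 t i). Qed.

Let K_gt0 : (0 < K)%N.
Proof. by rewrite lt0n; apply/eqP => K0; move: lnK_ge; rewrite K0 ln0 //; lra. Qed.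

Section Round.
Variable t : nat.
Hypothesis w_gt0 : forall j, (j < K)%N -> 0 < w t j.

Let Z := \sum_(j < K) eta t j * w t j.

Let Z_gt0 : 0 < Z.
Proof.
rewrite /Z (bigD1 (Ordinal K_gt0)) //=.
have : 0 < eta t 0 * w t 0 by rewrite mulr_gt0 ?eta_gt0 ?w_gt0.
have : 0 <= \sum_(i < K | i != Ordinal K_gt0) eta t i * w t i.
  by apply: sumr_ge0 => j _; apply/ltW/mulr_gt0; [exact: eta_gt0 | exact: w_gt0].
lra.
Qed.

Lemma usc_probs_ge0 i : (i < K)%N -> 0 <= p t i.
Proof.
move=> iK; apply: divr_ge0; last exact: ltW Z_gt0.
by apply/ltW/mulr_gt0; [exact: eta_gt0 | exact: w_gt0].
Qed.

Lemma usc_probs_sum1 : \sum_(i < K) p t i = 1.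
Proof. by rewrite /p /probs -mulr_suml mulfV // lt0r_neq0. Qed.

Lemma usc_point_in : X (usc_point t.+1).
Proof.
case: X_dom => _ _ convX _.
exact: convex_set_sum convX _ _ _ usc_probs_ge0 (fun i iK => experts_in t.+1 iK)
  usc_probs_sum1.
Qed.

Hypothesis tT : (t < T)%N.

Let g := grad (fs t.+1) (usc_point t.+1).

Let enorm_g_le : enorm g <= G.
Proof.
have t1T : (0 < t.+1 <= T)%N := tT.
by have [_ _ gG _ _] := fs_setting t1T; apply/gG/usc_point_in.
Qed.

Let ler_norm_dot_g y : X y -> `|dot g (y - xbar)| <= G * D.
Proof.
case: X_dom => _ _ _ diam Xy; apply: le_trans (ler_norm_dot _ _) _.
by rewrite ler_pM ?enorm_ge0 ?enorm_g_le ?diam.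
Qed.

Lemma usc_loss_bounded i : (i < K)%N -> 0 <= usc_loss t.+1 i <= 1.
Proof.
move=> iK; rewrite /usc_loss /loss_i -/g.
have := ler_norm_dot_g (experts_in t.+1 iK); rewrite ler_norml => /andP[h1 h2].
rewrite divr_ge0 ?ler_pdivrMr //=; lra.
Qed.

Lemma usc_mean_loss_bounded : 0 <= usc_mean_loss t.+1 <= 1.
Proof.
rewrite /usc_mean_loss sumr_ge0 /= => [|i _]; last first.
  by rewrite mulr_ge0 ?usc_probs_ge0 //; case/andP: (usc_loss_bounded (ltn_ord i)).
rewrite -usc_probs_sum1 ler_sum // => i _; rewrite ler_piMr ?usc_probs_ge0 //.
by case/andP: (usc_loss_bounded (ltn_ord i)).
Qed.

Lemma usc_regret_round_bounded i : (i < K)%N -> -1 <= r t.+1 i <= 1.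
Proof.
move=> iK; have := usc_mean_loss_bounded; have := usc_loss_bounded iK.
by rewrite /r /usc_regret_round; lra.
Qed.

Lemma usc_regret_round_balanced : \sum_(i < K) eta t i * w t i * r t.+1 i = 0.
Proof.
have meanE : usc_mean_loss t.+1 = (\sum_(i < K) eta t i * w t i * usc_loss t.+1 i) / Z.
  by rewrite mulr_suml; apply: eq_bigr => i _; rewrite mulrAC.
under eq_bigr do rewrite mulrBr.
by rewrite sumrB -mulr_suml -/Z meanE mulrC divfK ?subrr // lt0r_neq0.
Qed.

(* The losses are affine in the expert's point, so the instantaneous regret is
   the linearized regret at the combined point. *)
Lemma usc_regret_roundE i : (i < K)%N ->
  r t.+1 i = dot g (usc_point t.+1 - expert_out es fs i t.+1) / (2 * G * D).
Proof.
move=> iK; have GD0 : 2 * G * D != 0 by exact: lt0r_neq0.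
have pointE : usc_point t.+1 = \sum_(j < K) p t j *: expert_out es fs j t.+1 by [].
have meanE : usc_mean_loss t.+1 * (2 * G * D) = dot g (usc_point t.+1 - xbar) + G * D.
  rewrite /usc_mean_loss mulr_suml.
  rewrite (eq_bigr (fun j : 'I_K => p t j * dot g (expert_out es fs j t.+1) +
                  p t j * (G * D - dot g xbar))); last first.
    move=> j _; rewrite -[probs _ _ _ j]/(p t j) /usc_loss /loss_i -/g dotBr.
    by field; rewrite !lt0r_neq0.
  rewrite big_split /= -mulr_suml usc_probs_sum1 mul1r dotBr pointE dot_sumr.
  by under [in RHS]eq_bigr do rewrite dotZr; ring.
apply: (mulIf GD0); rewrite /r /usc_regret_round mulrBl meanE.
by rewrite /usc_loss /loss_i -/g !divfK // !dotBr; ring.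
Qed.

End Round.

Lemma usc_weights_gt0 t : (t <= T)%N -> forall j, (j < K)%N -> 0 < w t j.
Proof.
apply: (@ml_prod_weight_gt0 R K T w S r lnK_ge (fun=> erefl) (fun=> erefl)
  usc_sqregretS usc_weightsS) => s j sT jK w_gt0.
exact: usc_regret_round_bounded.
Qed.

Lemma usc_adapt_ml_prod i : (i < K)%N ->
  \sum_(s < T) r s.+1 i <=
    2 * ln (1 + K%:R * ln (1 + T%:R)) + 2 * ln (K%:R : R) + Num.sqrt (1 + S T i) *
     (ln (1 + K%:R * ln (1 + T%:R)) / Num.sqrt (ln (K%:R : R))
      + 6 * Num.sqrt (ln (K%:R : R))).
Proof.
apply: (@adapt_ml_prod_regret R K T w S r lnK_ge (fun=> erefl) (fun=> erefl)
  usc_sqregretS usc_weightsS) => [s j sT jK w_gt0|s sT w_gt0].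
  exact: usc_regret_round_bounded.
exact: usc_regret_round_balanced.
Qed.

Variable lam : R.
Hypothesis lam_gt0 : 0 < lam.
Hypothesis fs_strongly_convex :
  forall t, (1 <= t <= T)%N -> strongly_convex_on X lam (fs t).

(* Strong convexity at the combined point, with the distance to the expert's
   point bounded below through Cauchy-Schwarz by 2 D |r|. *)
Lemma usc_round_le t i : (t < T)%N -> (i < K)%N ->
  fs t.+1 (usc_point t.+1) - fs t.+1 (expert_out es fs i t.+1) <=
    2 * G * D * r t.+1 i - 2 * lam * D ^+ 2 * r t.+1 i ^+ 2.
Proof.
move=> tT iK; have w_gt0 := usc_weights_gt0 (ltnW tT).
have t1T : (0 < t.+1 <= T)%N := tT.
have := fs_strongly_convex t1T (usc_point_in w_gt0) (experts_in t.+1 iK).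
set g := grad _ _; set x := usc_point _; set y := expert_out _ _ _ _.
have dot_gyx : dot g (y - x) = - (2 * G * D * r t.+1 i).
  rewrite (usc_regret_roundE w_gt0 iK) -/g -/x -/y mulrC divfK ?lt0r_neq0 //.
  by rewrite !dotBr; ring.
have g_le : enorm g ^+ 2 <= G ^+ 2.
  have [_ _ gG _ _] := fs_setting t1T.
  rewrite ler_sqr ?nnegrE ?enorm_ge0 ?(ltW G_gt0) //.
  exact/gG/usc_point_in.
have dist_ge : 4 * D ^+ 2 * r t.+1 i ^+ 2 <= enorm (y - x) ^+ 2.
  rewrite -(ler_pM2l (exprn_gt0 2 G_gt0)).
  have := dot_sqr_le g (y - x); rewrite dot_gyx sqrrN -!enorm_sqr.
  have : enorm g ^+ 2 * enorm (y - x) ^+ 2 <= G ^+ 2 * enorm (y - x) ^+ 2.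
    by apply: ler_wpM2r g_le; exact: sqr_ge0.
  have -> : (2 * G * D * r t.+1 i) ^+ 2 = G ^+ 2 * (4 * D ^+ 2 * r t.+1 i ^+ 2).
    by ring.
  lra.
have : lam / 2 * (4 * D ^+ 2 * r t.+1 i ^+ 2) <= lam / 2 * enorm (y - x) ^+ 2.
  by apply: ler_wpM2l dist_ge; rewrite divr_ge0 ?ltW.
rewrite dot_gyx; lra.
Qed.

(* AM-GM absorbs the square-root term of the Adapt-ML-Prod bound into the
   negative quadratic term provided by strong convexity. *)
Lemma usc_meta_regret i : (i < K)%N ->
  \sum_(s < T) (fs s.+1 (usc_point s.+1) - fs s.+1 (expert_out es fs i s.+1)) <=
   2 * G * D * (2 * ln (1 + K%:R * ln (1 + T%:R)) + 2 * ln (K%:R : R)) +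
   G ^+ 2 * (ln (1 + K%:R * ln (1 + T%:R)) / Num.sqrt (ln (K%:R : R)) +
      6 * Num.sqrt (ln (K%:R : R))) ^+ 2 / (2 * lam) + 2 * lam * D ^+ 2.
Proof.
move=> iK; set B := ln (1 + _); set k := ln _.
have meta : \sum_(s < T) (fs s.+1 (usc_point s.+1) - fs s.+1 (expert_out es fs i s.+1))
    <= 2 * G * D * \sum_(s < T) r s.+1 i - 2 * lam * D ^+ 2 * S T i.
  rewrite usc_sqregretE !mulr_sumr -sumrB; apply: ler_sum => s _.
  exact: usc_round_le.
have := usc_adapt_ml_prod iK; rewrite -/B -/k.
set a := B / _ + _; set u := Num.sqrt (1 + S T i) => amlp.
have u2 : u ^+ 2 = 1 + S T i by rewrite sqr_sqrtr // addr_ge0 // usc_sqregret_ge0.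
have l2 : 0 < 2 * lam by rewrite mulr_gt0.
have amgm : 2 * G * D * (u * a) <= 2 * lam * D ^+ 2 * u ^+ 2 + G ^+ 2 * a ^+ 2 / (2 * lam).
  rewrite -(ler_pM2l l2) -subr_ge0.
  have -> : 2 * lam * (2 * lam * D ^+ 2 * u ^+ 2 + G ^+ 2 * a ^+ 2 / (2 * lam)) -
      2 * lam * (2 * G * D * (u * a)) = (2 * lam * D * u - G * a) ^+ 2.
    by field; exact: lt0r_neq0.
  exact: sqr_ge0.
have := ler_wpM2l (ltW GD_gt0) amlp.
rewrite u2 in amgm; lra.
Qed.

Lemma regret_usc_split i :
  regret X T fs (usc G D xbar es fs) =
  \sum_(s < T) (fs s.+1 (usc_point s.+1) - fs s.+1 (expert_out es fs i s.+1)) +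
  regret X T fs (expert_out es fs i).
Proof.
rewrite /regret !big_add1 /= !big_mkord sumrB.
under eq_bigr do rewrite uscE.
ring.
Qed.

End USCAnalysis.

Section ListMembership.
Variable A : Type.

Lemma In_cat (x : A) (s1 s2 : seq A) :
  List.In x (s1 ++ s2) <-> List.In x s1 \/ List.In x s2.
Proof. by elim: s1 => [|y s IH] /=; [tauto | rewrite IH; tauto]. Qed.

Lemma In_nth (x0 : A) (s : seq A) i : (i < size s)%N -> List.In (nth x0 s i) s.
Proof. by elim: s i => [|y s IH] [|i] //= iS; [left | right; exact: IH]. Qed.

Lemma In_nth_index (x0 : A) (s : seq A) z : List.In z s ->
  exists2 i, (i < size s)%N & nth x0 s i = z.
Proof.
elim: s => [|y s IH] //= [->|/IH[i iS <-]]; first by exists 0%N.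
by exists i.+1.
Qed.

Lemma In_map (B : Type) (f : B -> A) (s : seq B) y :
  List.In y (map f s) <-> exists2 x, List.In x s & y = f x.
Proof.
elim: s => [|x s IH] /=; first by split => // -[].
rewrite IH; split.
  by case=> [<-|[z zs ->]]; [exists x; [left|] | exists z; [right|]].
by case=> z [<-|zs] ->; [left | right; exists z].
Qed.

Lemma In_allpairs (B C : Type) (f : B -> C -> A) (s : seq B) (t : seq C) z :
  List.In z [seq f x y | x <- s, y <- t] <->
  exists x y, [/\ List.In x s, List.In y t & z = f x y].
Proof.
elim: s => [|x s IH] /=; first by split => // -[x [y []]].
rewrite In_cat In_map IH; split.
  case=> [[y yt ->]|[x' [y [x's yt ->]]]]; first by exists x, y; split; [left|..].
  by exists x', y; split; [right|..].
case=> x' [y [[<-|x's] yt ->]]; first by left; exists y.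
by right; exists x', y.
Qed.

End ListMembership.

Lemma In_iota (k m n : nat) : (m <= k < m + n)%N -> List.In k (iota m n).
Proof.
elim: n m => [|n IH] m /=; first by rewrite addn0 => /andP[/leq_ltn_trans h /h]; rewrite ltnn.
case/andP=> mk kmn; have [->|mk'] := eqVneq m k; [by left | right].
by apply: IH; rewrite addSnnS kmn andbT ltn_neqAle mk' mk.
Qed.

Section Grid.
Variable R : realType.

Lemma grid_gt0 (T : nat) (l : R) : (0 < T)%N -> List.In l (grid R T) -> 0 < l.
Proof.
by move=> T0 /In_map[k _ ->]; rewrite divr_gt0 // ltr0n // expn_gt0.
Qed.

Lemma pow2_bracket N (y : R) : 1 <= y -> y <= (2 ^ N)%:R ->
  exists k, [/\ (k <= N)%N, (2 ^ k)%:R <= y & y <= (2 ^ k.+1)%:R].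
Proof.
elim: N => [|N IH] y1 yN; first by exists 0%N; split; rewrite // (le_trans yN) ?ler_nat.
have [yN'|yN'] := leP y (2 ^ N)%:R; last by exists N; split; rewrite // ltW.
by have [k [kN k1 k2]] := IH y1 yN'; exists k; split; rewrite // leqW.
Qed.

Lemma grid_halving (T : nat) (lam : R) : (0 < T)%N -> T%:R^-1 <= lam <= 1 ->
  exists l, [/\ List.In l (grid R T), l <= lam & lam <= 2 * l].
Proof.
move=> T0 /andP[lam_ge lam_le]; have Tp : 0 < T%:R :> R by rewrite ltr0n.
have y1 : 1 <= lam * T%:R by rewrite -ler_pdivrMr // div1r.
have yN : lam * T%:R <= (2 ^ up_log 2 T)%:R.
  apply: (@le_trans _ _ T%:R); first exact: ler_piMl (ltW Tp) lam_le.
  by rewrite ler_nat up_logP.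
have [k [kN k1 k2]] := pow2_bracket y1 yN.
exists ((2 ^ k)%:R / T%:R); split.
- by apply/In_map; exists k => //; apply: In_iota; rewrite add0n ltnS kN.
- by rewrite ler_pdivrMr.
- by rewrite mulrA ler_pdivlMr // -natrM -expnS.
Qed.

End Grid.

Section ExpertCount.
Variables (R : realType) (T K n : nat).
Hypothesis T_ge3 : (3 <= T)%N.
Let N := up_log 2 T.
Hypothesis K_ge : (N.+1 <= K)%N.
Hypothesis K_le : (K <= n * N.+1)%N.

Let T_gt0 : 0 < T%:R :> R. Proof. by rewrite ltr0n (leq_trans _ T_ge3). Qed.
Let lnT_ge1 : 1 <= ln (T%:R : R). Proof. exact: ln_nat_ge1. Qed.
Let K_gt0 : 0 < K%:R :> R. Proof. by rewrite ltr0n (leq_trans _ K_ge). Qed.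

Lemma ln_le_up_log : ln (T%:R : R) <= N%:R.
Proof.
have : ln (T%:R : R) <= ln ((2 ^ N)%:R) by rewrite ler_ln ?posrE ?ler_nat ?up_logP.
rewrite natrX lnXn // => /le_trans; apply.
by rewrite -[ln 2 *+ N]mulr_natr ler_piMl ?ler0n ?ln2_le1.
Qed.

Lemma up_log_le_ln : (N.+1)%:R <= 4 * ln (T%:R : R) :> R.
Proof.
have N_gt0 : (0 < N)%N by rewrite up_log_gt0 (leq_trans _ T_ge3).
have : ln 2 * (N.-1)%:R < ln (T%:R : R).
  rewrite mulr_natr -lnXn // -natrX ltr_ln ?posrE ?ltr0n ?expn_gt0 ?(leq_trans _ T_ge3) //.
  by rewrite ltr_nat up_log_gtn ?(leq_trans _ T_ge3).
have -> : (N.+1)%:R = (N.-1)%:R + 2 :> R by rewrite -natrD addn2 prednK.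
have := lnT_ge1; have := @ln2_ge_half R; have := ler0n R N.-1; nra.
Qed.

Lemma ln1DT_le : ln (1 + T%:R : R) <= 2 * ln (T%:R : R).
Proof.
have T3 : 3 <= T%:R :> R by rewrite (ler_nat R 3).
rewrite [2 * _]mulr_natl -lnXn // ler_ln ?posrE ?exprn_gt0 //; nra.
Qed.

Lemma ln_size_ge_half : 2^-1 <= ln (K%:R : R).
Proof.
apply: le_trans (ln2_ge_half R) _; rewrite ler_ln ?posrE // ler_nat.
by apply: leq_trans K_ge; rewrite ltnS up_log_gt0 (leq_trans _ T_ge3).
Qed.

Lemma ln_ln_le_ln_size : ln (ln (T%:R : R)) <= ln (K%:R : R).
Proof.
rewrite ler_ln ?posrE //; last by have := lnT_ge1; lra.
by apply: le_trans ln_le_up_log _; rewrite ler_nat ltnW.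
Qed.

Lemma ln_mix_le : ln (1 + K%:R * ln (1 + T%:R)) <= 6 * ln (K%:R : R).
Proof.
have K1 : 1 <= K%:R :> R by rewrite ler1n (leq_trans _ K_ge).
have mix_le : 1 + K%:R * ln (1 + T%:R) <= K%:R * (3 * ln (T%:R : R)).
  have := ler_wpM2l (ltW K_gt0) ln1DT_le; have := lnT_ge1; nra.
have lnT_gt0 : 0 < ln (T%:R : R) by have := lnT_ge1; lra.
have : ln (1 + K%:R * ln (1 + T%:R)) <= ln K%:R + ln 3 + ln (ln (T%:R : R)).
  rewrite -!lnM ?posrE ?mulr_gt0 // -mulrA ler_ln ?posrE ?mulr_gt0 //.
  by rewrite ltr_pwDl // mulr_ge0 ?ler0n // ln_ge0 // lerDl.
have := ln_size_ge_half; have := ln_ln_le_ln_size.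
have : ln (3 : R) <= 2 by have := @ln_le_subr1 R 3 (ltr0n _ 3); lra.
lra.
Qed.

Lemma ln_size_le : ln (K%:R : R) <= ln (n%:R : R) + 2 + ln (ln (T%:R : R)).
Proof.
have K_pos : (0 < K)%N := leq_trans (ltn0Sn _) K_ge.
have n_gt0 : (0 < n)%N by move: K_le K_pos; nia.
have lnT_gt0 : 0 < ln (T%:R : R) by have := lnT_ge1; lra.
have : ln (K%:R : R) <= ln (n%:R * (4 * ln (T%:R : R))).
  rewrite ler_ln ?posrE ?mulr_gt0 ?ltr0n //.
  apply: (@le_trans _ _ (n%:R * (N.+1)%:R)); first by rewrite -natrM ler_nat.
  by rewrite ler_wpM2l ?ler0n ?up_log_le_ln.
have : ln (4 : R) <= 2.
  by rewrite (_ : 4 = 2 * 2) ?lnM ?posrE -?natrM //; have := @ln2_le1 R; lra.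
rewrite !lnM ?posrE ?mulr_gt0 ?ltr0n //; lra.
Qed.

End ExpertCount.

Lemma size_experts_bounds (R : realType) d (T : nat) (Astr Aexp : seq (R -> alg R d))
  (Acon : seq (alg R d)) : (0 < size Astr)%N ->
  ((up_log 2 T).+1 <= size (experts T Astr Aexp Acon) <=
    (size Astr + size Aexp + size Acon) * (up_log 2 T).+1)%N.
Proof.
rewrite /experts !size_cat !size_allpairs /grid size_map size_iota; nia.
Qed.

Section Comparators.
Variables (R : realType) (d : nat) (X : set 'rV[R]_d) (T : nat)
  (fs : nat -> 'rV[R]_d -> R).

Lemma Lstar_ge0 (G D H : R) : domain_ok X D -> setting X G H T fs -> 0 <= Lstar X T fs.
Proof.
case=> [[x0 Xx0] _ _ _] fs_setting; apply: lb_le_inf; first by exists (cumloss T fs x0); exists x0.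
move=> _ [x Xx <-]; rewrite /cumloss big_nat_cond sumr_ge0 // => t /andP[tT _].
by have [_ _ _ fs_ge0 _] := fs_setting t tT; exact: fs_ge0.
Qed.

Lemma VT_ge0 : 0 <= VT X T fs.
Proof.
rewrite /VT sumr_ge0 // => t _; set E := [set _ | x in X].
have [hs|hs] := pselect (has_sup E); last by rewrite sup_out.
have [y [x Xx yE]] := hs.1.
by apply: le_trans (sup_upper_bound hs (_ : E y)); [rewrite -yE sqr_ge0 | exists x].
Qed.

End Comparators.

Section FinalArithmetic.
Variable R : realType.

Lemma sqr_rate_coef_le (B k : R) : 0 < k -> 0 <= B <= 6 * k ->
  (B / Num.sqrt k + 6 * Num.sqrt k) ^+ 2 <= 144 * k.
Proof.
move=> k0 /andP[B0 Bk]; have sk : 0 < Num.sqrt k by rewrite sqrtr_gt0.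
have skk : Num.sqrt k ^+ 2 = k by rewrite sqr_sqrtr // ltW.
have : (B / Num.sqrt k) ^+ 2 <= 36 * k.
  rewrite expr_div_n skk ler_pdivrMr //.
  by rewrite (le_trans (_ : _ <= (6 * k) ^+ 2)) ?ler_sqr ?nnegrE //; nra.
have y2 : (6 * Num.sqrt k) ^+ 2 = 36 * k by rewrite exprMn skk; ring.
set x := B / _; set y := 6 * _ in y2 *.
have : 2 * x ^+ 2 + 2 * y ^+ 2 - (x + y) ^+ 2 = (x - y) ^+ 2 by ring.
have := sqr_ge0 (x - y); lra.
Qed.

Lemma usc_bound_arith (G D C1 lam k B L P m : R) :
  0 < G -> 0 < D -> 0 < C1 -> 0 < lam <= 1 ->
  2^-1 <= k -> 0 <= B <= 6 * k -> 0 <= L -> k <= P + L -> 2^-1 <= P -> 2^-1 <= m ->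
  2 * G * D * (2 * B + 2 * k) +
   G ^+ 2 * (B / Num.sqrt k + 6 * Num.sqrt k) ^+ 2 / (2 * lam) + 2 * lam * D ^+ 2
  + C1 / (lam / 2) * m
  <= ((28 * G * D + 72 * G ^+ 2) * (2 * P) + 4 * D ^+ 2 + 2 * C1) / lam * (m + L).
Proof.
move=> G0 D0 C0 /andP[l0 l1] hk hB L0 kPL P0 m0.
have k0 : 0 < k by lra.
have a2 := sqr_rate_coef_le k0 hB; have /andP[B0 Bk] := hB.
set a := B / _ + _ in a2 *; set Q := 28 * G * D + 72 * G ^+ 2.
rewrite -(ler_pM2l l0).
have -> : lam * (2 * G * D * (2 * B + 2 * k) + G ^+ 2 * a ^+ 2 / (2 * lam) +
    2 * lam * D ^+ 2 + C1 / (lam / 2) * m) = lam * (2 * G * D * (2 * B + 2 * k)) +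
    G ^+ 2 * a ^+ 2 / 2 + 2 * lam ^+ 2 * D ^+ 2 + 2 * C1 * m.
  by field; exact: lt0r_neq0.
have -> : lam * ((Q * (2 * P) + 4 * D ^+ 2 + 2 * C1) / lam * (m + L)) =
    (Q * (2 * P) + 4 * D ^+ 2 + 2 * C1) * (m + L).
  by field; exact: lt0r_neq0.
have GD : 0 < G * D by rewrite mulr_gt0.
have G2 : 0 < G ^+ 2 by rewrite exprn_gt0.
have D2 : 0 < D ^+ 2 by rewrite exprn_gt0.
have := ler_wpM2l (ltW G2) a2.
have : lam * (2 * G * D * (2 * B + 2 * k)) <= 28 * (G * D) * k.
  have : 2 * G * D * (2 * B + 2 * k) <= 28 * (G * D) * k by nra.
  apply: le_trans; rewrite ler_piMl // mulr_ge0 ?mulr_ge0 //; lra.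
have : Q * k <= Q * (2 * P * (m + L)) by apply: ler_wpM2l; rewrite /Q; nra.
have : 2 * lam ^+ 2 * D ^+ 2 <= 4 * D ^+ 2 * (m + L).
  have : lam ^+ 2 <= 1 by rewrite expr2; nra.
  nra.
have := mulr_ge0 (ltW C0) L0.
rewrite /Q; lra.
Qed.

End FinalArithmetic.

Section USCRegret.
Variables (R : realType) (d : nat) (X : set 'rV[R]_d) (G D H C1 : R) (T n : nat)
  (fs : nat -> 'rV[R]_d -> R) (lam : R) (Astr Aexp : seq (R -> alg R d))
  (Acon : seq (alg R d)) (xbar : 'rV[R]_d).
Hypothesis G_gt0 : 0 < G.
Hypothesis C1_gt0 : 0 < C1.
Hypothesis D_gt0 : 0 < D.
Hypothesis T_ge3 : (3 <= T)%N.
Hypothesis X_dom : domain_ok X D.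
Hypothesis fs_setting : setting X G H T fs.
Hypothesis lam_bounds : T%:R^-1 <= lam <= 1.
Hypothesis fs_strongly_convex :
  forall t, (1 <= t <= T)%N -> strongly_convex_on X lam (fs t).
Hypothesis Astr_in : forall A, List.In A Astr -> forall p, 0 < p -> forall h, X (A p h).
Hypothesis Aexp_in : forall A, List.In A Aexp -> forall p, 0 < p -> forall h, X (A p h).
Hypothesis Acon_in : forall A, List.In A Acon -> forall h, X (A h).
Hypothesis xbar_in : X xbar.
Hypothesis size_n : (size Astr + size Aexp + size Acon)%N = n.
Let es := experts T Astr Aexp Acon.
Let K := size es.

Let T_gt0 : (0 < T)%N. Proof. exact: leq_trans T_ge3. Qed.

Let lam_gt0 : 0 < lam.
Proof. by case/andP: lam_bounds => + _; apply: lt_le_trans; rewrite invr_gt0 ltr0n. Qed.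

Lemma expert_out_in i t : (i < K)%N -> X (expert_out es fs i t).
Proof.
move=> iK; have := In_nth (fun _ => 0) iK; rewrite /expert_out /run.
set A := nth _ es i; rewrite /es /experts !In_cat.
case=> [/In_allpairs[B [l [Bs /(grid_gt0 T_gt0) l0 ->]]]|
        [/In_allpairs[B [l [Bs /(grid_gt0 T_gt0) l0 ->]]]|As]].
- exact: Astr_in.
- exact: Aexp_in.
- exact: Acon_in.
Qed.

Section StrongExpert.
Variables (A : R -> alg R d) (m : R).
Hypothesis A_in : List.In A Astr.
Hypothesis m_ge : 2^-1 <= m.
Hypothesis A_regret : forall l, 0 < l ->
  (forall t, (1 <= t <= T)%N -> strongly_convex_on X l (fs t)) ->
  regret X T fs (run (A l) fs) <= C1 / l * m.

Let K_bounds : ((up_log 2 T).+1 <= K <= n * (up_log 2 T).+1)%N.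
Proof.
by rewrite -size_n size_experts_bounds //; move: A_in; case: (Astr).
Qed.

(* The grid contains some l <= lam <= 2 l; the functions are l-strongly convex,
   so the expert E(A, l) enjoys A's guarantee with 1 / l <= 2 / lam. *)
Lemma usc_regret_le_strong_expert :
  regret X T fs (usc G D xbar es fs) <=
   2 * G * D * (2 * ln (1 + K%:R * ln (1 + T%:R)) + 2 * ln (K%:R : R)) +
   G ^+ 2 * (ln (1 + K%:R * ln (1 + T%:R)) / Num.sqrt (ln (K%:R : R)) +
      6 * Num.sqrt (ln (K%:R : R))) ^+ 2 / (2 * lam) + 2 * lam * D ^+ 2
   + C1 / (lam / 2) * m.
Proof.
have /andP[K_ge _] := K_bounds.
have [l [lgrid l_le le_l]] := grid_halving T_gt0 lam_bounds.
have l_gt0 := grid_gt0 T_gt0 lgrid.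
have [i iK Ai] : exists2 i, (i < K)%N & nth (fun _ => 0) es i = A l.
  apply: In_nth_index; rewrite /es /experts In_cat; left.
  by apply/In_allpairs; exists A, l.
rewrite (regret_usc_split _ _ _ _ _ _ _ i) -/es; apply: lerD.
  by have := usc_meta_regret G_gt0 D_gt0 X_dom fs_setting expert_out_in xbar_in
    (ln_size_ge_half R T_ge3 K_ge) lam_gt0 fs_strongly_convex iK.
have -> : expert_out es fs i = run (A l) fs by rewrite /expert_out Ai.
apply: le_trans (A_regret l_gt0 _) _.
  move=> t tT x y Xx Xy; have := fs_strongly_convex tT Xx Xy.
  have : l / 2 * enorm (y - x) ^+ 2 <= lam / 2 * enorm (y - x) ^+ 2.
    by rewrite ler_wpM2r ?sqr_ge0 // ler_pM2r.
  lra.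
rewrite ler_wpM2r ?(le_trans _ m_ge) // ler_wpM2l ?(ltW C1_gt0) //.
by rewrite lef_pV2 ?posrE ?divr_gt0 //; lra.
Qed.

Lemma usc_regret_le :
  regret X T fs (usc G D xbar es fs) <=
    ((28 * G * D + 72 * G ^+ 2) * (2 * (ln (n%:R : R) + 2)) + 4 * D ^+ 2 + 2 * C1)
      / lam * (m + ln (ln T%:R)).
Proof.
have /andP[K_ge K_le] := K_bounds.
apply: le_trans usc_regret_le_strong_expert _.
apply: usc_bound_arith => //.
- by rewrite lam_gt0; case/andP: lam_bounds.
- by have := ln_size_ge_half R T_ge3 K_ge.
- apply/andP; split; last by have := ln_mix_le R T_ge3 K_ge.
  by rewrite ln_ge0 // lerDl mulr_ge0 ?ler0n // ln_ge0 // lerDl.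
- by rewrite !ln_ge0 // ln_nat_ge1.
- by have := ln_size_le R T_ge3 K_ge K_le.
- have : (1 <= n)%N by move: K_le K_ge; nia.
  by rewrite -(ler1n R) => /ln_ge0; lra.
Qed.

End StrongExpert.
End USCRegret.

Unset Implicit Arguments.

Theorem corollary1 (R : realType) (G D H C1 : R) (n : nat) :
  0 < C1 ->
  exists C : R,
  forall (d : nat) (X : set 'rV[R]_d) (T : nat) (fs : nat -> 'rV[R]_d -> R)
    (lam : R) (Astr Aexp : seq (R -> alg R d)) (Acon : seq (alg R d))
    (A1 A2 : R -> alg R d) (xbar : 'rV[R]_d),
  0 < G -> 0 < D ->
  (3 <= T)%N ->
  domain_ok X D ->
  setting X G H T fs ->
  T%:R^-1 <= lam <= 1 ->
  (forall t, (1 <= t <= T)%N -> strongly_convex_on X lam (fs t)) ->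
  (* all experts are online algorithms: their outputs lie in X *)
  (forall A, List.In A Astr -> forall p, 0 < p -> forall h, X (A p h)) ->
  (forall A, List.In A Aexp -> forall p, 0 < p -> forall h, X (A p h)) ->
  (forall A, List.In A Acon -> forall h, X (A h)) ->
  X xbar ->
  size Astr + size Aexp + size Acon = n ->
  List.In A1 Astr -> List.In A2 Astr ->
  (* regret bounds R(A1, l') and R(A2, l') *)
  (forall l', 0 < l' -> forall gs : nat -> 'rV[R]_d -> R,
     setting X G H T gs ->
     (forall t, (1 <= t <= T)%N -> strongly_convex_on X l' (gs t)) ->
     regret X T gs (run (A1 l') gs) <= C1 / l' * ln (VT X T gs + 2)) ->
  (forall l', 0 < l' -> forall gs : nat -> 'rV[R]_d -> R,
     setting X G H T gs ->
     (forall t, (1 <= t <= T)%N -> strongly_convex_on X l' (gs t)) ->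
     regret X T gs (run (A2 l') gs) <= C1 / l' * ln (Lstar X T gs + 2)) ->
  regret X T fs (usc G D xbar (experts T Astr Aexp Acon) fs)
    <= C / lam * (Num.min (ln (Lstar X T fs + 2)) (ln (VT X T fs + 2))
                  + ln (ln T%:R)).
Proof.
move=> C1_gt0.
exists ((28 * G * D + 72 * G ^+ 2) * (2 * (ln (n%:R : R) + 2)) + 4 * D ^+ 2 + 2 * C1).
move=> d X T fs lam Astr Aexp Acon A1 A2 xbar G_gt0 D_gt0 T_ge3 X_dom fs_setting
  lam_bounds fs_sc Astr_in Aexp_in Acon_in xbar_in size_n A1_in A2_in A1_regret A2_regret.
have bound := usc_regret_le G_gt0 C1_gt0 D_gt0 T_ge3 X_dom fs_setting lam_bounds fs_sc
  Astr_in Aexp_in Acon_in xbar_in size_n.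
have ln_ge_half (z : R) : 0 <= z -> 2^-1 <= ln (z + 2).
  by move=> z0; apply: le_trans (ln2_ge_half R) _; rewrite ler_ln ?posrE //; lra.
have [_|_] := leP (ln (Lstar X T fs + 2)) (ln (VT X T fs + 2)).
  apply: bound A2_in (ln_ge_half _ (Lstar_ge0 X_dom fs_setting)) _ => l l0 sc.
  exact: A2_regret.
apply: bound A1_in (ln_ge_half _ (VT_ge0 X T fs)) _ => l l0 sc.
exact: A1_regret.
Qed.
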